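(* Let $\mathbf X$ denote the observed data (the concatenation of $K$ lists of records, or comparison data computed from them), and let $\mathbf Z$ range over the (finite) set of coreference partition labelings of the records in $\mathbf X$. Suppose: (i) our beliefs on $\mathbf Z$ are represented by the posterior $p_{\textsc{l}}(\mathbf Z\mid \mathbf X)\propto \mathcal{L}_{\textsc{l}}(\mathbf Z\mid \mathbf X)\,p(\mathbf Z)$, coming from a record linkage model with likelihood $\mathcal{L}_{\textsc{l}}(\mathbf Z\mid \mathbf X)$ and prior $p(\mathbf Z)$, with $0<\sum_{\mathbf Z}\mathcal{L}_{\textsc{l}}(\mathbf Z\mid \mathbf X)p(\mathbf Z)<\infty$; (ii) for each $\mathbf Z$, $p_{\textsc{c}}(N\mid \boldsymbol n(\mathbf Z))$ is a probability distribution over the population size $N$ (a posterior from a capture-recapture model with likelihood $\mathcal{L}_{\textsc{c}}(N\mid \boldsymbol n(\mathbf Z))$ and prior $p(N)$), depending on $\mathbf Z$ only through the table $\boldsymbol n(\mathbf Z)$ of inclusion-pattern frequencies. Define the linkage-averaged population size posterior $$p_{\textsc{la}}(N)=\sum_{\mathbf Z} p_{\textsc{c}}(N\mid \boldsymbol n(\mathbf Z))\,p_{\textsc{l}}(\mathbf Z\mid \mathbf X).$$ Then $p_{\textsc{la}}(N)$ is the marginal posterior distribution of $N$, $p(N\mid\mathbf X)$, under the likelihood $\mathcal{L}_{\textsc{l}}(\mathbf Z\mid \mathbf X)$ and the joint prior $p(N,\mathbf Z)=p_{\textsc{c}}(N\mid \boldsymbol n(\mathbf Z))\,p(\mathbf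 Z)$, i.e. the joint posterior $p(N,\mathbf Z\mid\mathbf X)\propto \mathcal{L}_{\textsc{l}}(\mathbf Z\mid \mathbf X)\,p_{\textsc{c}}(N\mid \boldsymbol n(\mathbf Z))\,p(\mathbf Z)$ has $N$-marginal equal to $p_{\textsc{la}}(N)$.
   Context: There are $K$ lists $\mathbf X_1,\dots,\mathbf X_K$ of records, with $\mathbf X$ their concatenation containing $r$ records. A coreference partition labeling is a vector $\mathbf Z=(Z_1,\dots,Z_r)$ such that records $i,j$ refer to the same individual iff $Z_i=Z_j$. Relabeling so that labels are $1,\dots,n$ (with $n$ the number of distinct labels), define for each label $z$ and list $k$ the indicator $h_{zk}=1$ if some record $i$ in $\mathbf X_k$ has $Z_i=z$, and $0$ otherwise. An inclusion pattern is $\boldsymbol h\in\{0,1\}^K$; $\boldsymbol n(\mathbf Z)=\{n_{\boldsymbol h}\}_{\boldsymbol h\in\{0,1\}^K\setminus\{0\}^K}$ where $n_{\boldsymbol h}$ is the number of labels $z$ with $(h_{z1},\dots,h_{zK})=\boldsymbol h$. $N$ is the (unknown) total population size, a nonnegative integer. *)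

From HB Require Import structures.
From mathcomp Require Import all_boot all_order all_algebra.
From mathcomp Require Import all_classical all_reals all_analysis.
Set Implicit Arguments. Unset Strict Implicit. Unset Printing Implicit Defensive.
Import Order.TTheory GRing.Theory Num.Theory.
Import numFieldNormedType.Exports.
Local Open Scope ring_scope.

(* Records: K lists, list k has m k records; record (k, j) is the j-th record of list k.
   The concatenation X has r = \sum_k m k records. *)
Definition record (K : nat) (m : 'I_K -> nat) : finType := {k : 'I_K & 'I_(m k)}.

(* Coreference partitions of the records (a labeling Z up to relabeling). *)
Definition coref_partitions (K : nat) (m : 'I_K -> nat) : {set {set {set record m}}} :=
  [set P : {set {set record m}} | finset.partition P [set: record m]].

Definition pattern (K : nat) (m : 'I_K -> nat) (B : {set record m}) : {ffun 'I_K -> bool} :=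
  [ffun k => [exists i in B, tag i == k]].

(* The table n(Z) = {n_h}_{h <> 0}: n_h = number of individuals with pattern h.
   (For the zero pattern we set 0; it is never the pattern of a block.) *)
Definition ntab (K : nat) (m : 'I_K -> nat) (P : {set {set record m}}) :
  {ffun {ffun 'I_K -> bool} -> nat} :=
  [ffun h => if h == [ffun => false] then 0%N else #|[set B in P | pattern B == h]|].

Definition pL (R : realType) (K : nat) (m : 'I_K -> nat)
  (L pZ : {set {set record m}} -> R) (Z : {set {set record m}}) : R :=
  L Z * pZ Z / \sum_(Z' in coref_partitions m) L Z' * pZ Z'.

Definition pLA (R : realType) (K : nat) (m : 'I_K -> nat)
  (L pZ : {set {set record m}} -> R)
  (pC : {ffun {ffun 'I_K -> bool} -> nat} -> nat -> R) (N : nat) : R :=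
  \sum_(Z in coref_partitions m) pC (ntab Z) N * pL L pZ Z.

Definition joint_unnorm (R : realType) (K : nat) (m : 'I_K -> nat)
  (L pZ : {set {set record m}} -> R)
  (pC : {ffun {ffun 'I_K -> bool} -> nat} -> nat -> R) (N : nat) (Z : {set {set record m}}) : R :=
  L Z * pC (ntab Z) N * pZ Z.

Definition joint_partial (R : realType) (K : nat) (m : 'I_K -> nat)
  (L pZ : {set {set record m}} -> R)
  (pC : {ffun {ffun 'I_K -> bool} -> nat} -> nat -> R) (n : nat) : R :=
  \sum_(N < n) \sum_(Z in coref_partitions m) joint_unnorm L pZ pC N Z.

Definition joint_norm (R : realType) (K : nat) (m : 'I_K -> nat)
  (L pZ : {set {set record m}} -> R)
  (pC : {ffun {ffun 'I_K -> bool} -> nat} -> nat -> R) : R :=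
  limn (joint_partial L pZ pC).

Definition marg_post (R : realType) (K : nat) (m : 'I_K -> nat)
  (L pZ : {set {set record m}} -> R)
  (pC : {ffun {ffun 'I_K -> bool} -> nat} -> nat -> R) (N : nat) : R :=
  (\sum_(Z in coref_partitions m) joint_unnorm L pZ pC N Z) / joint_norm L pZ pC.

From HB Require Import structures.
From mathcomp Require Import all_boot all_order all_algebra.
From mathcomp Require Import all_classical all_reals all_analysis.
Import Order.TTheory GRing.Theory Num.Theory.
Import numFieldNormedType.Exports.
Local Open Scope ring_scope.
Local Open Scope classical_set_scope.

(* Exchanging the finite sum over Z with the partial sums over N writes the
   partial sums of the joint posterior as a finite mixture, with weights
   L(Z) p(Z), of the partial sums of p_C(. | n(Z)).  Each of these tends to 1,
   so the joint normalising constant is the linkage one, sum_Z L(Z) p(Z), and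
   the N-marginal of the joint posterior is then p_LA(N) term by term. *)

Lemma cvg_sum_mixture (R : numFieldType) (I : finType) (A : {pred I})
    (w : I -> R) (u : I -> nat -> R) (l : I -> R) :
  (forall i, i \in A -> u i @ \oo --> l i) ->
  (fun n => \sum_(i in A) w i * u i n) @ \oo --> \sum_(i in A) w i * l i.
Proof.
move=> u_cvg; apply: (@cvg_big R _ +%R 0 _ add_continuous) => i Ai.
by apply: cvgMl_tmp; exact: u_cvg.
Qed.

Section JointPosterior.

Variables (R : realType) (K : nat) (m : 'I_K -> nat).
Variables (L pZ : {set {set record m}} -> R).
Variable pC : {ffun {ffun 'I_K -> bool} -> nat} -> nat -> R.

Local Notation linkage_norm := (\sum_(Z in coref_partitions m) L Z * pZ Z).

Lemma joint_partialE n :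
  joint_partial L pZ pC n =
  \sum_(Z in coref_partitions m) L Z * pZ Z * \sum_(N < n) pC (ntab Z) N.
Proof.
rewrite /joint_partial exchange_big /=; apply: eq_bigr => Z _.
by rewrite mulr_sumr; apply: eq_bigr => N _; rewrite /joint_unnorm mulrAC.
Qed.

Hypothesis pC_sum1 : forall Z, Z \in coref_partitions m ->
  (fun n => \sum_(N < n) pC (ntab Z) N) @ \oo --> (1 : R).

Lemma joint_partial_cvg : joint_partial L pZ pC @ \oo --> linkage_norm.
Proof.
have -> : linkage_norm = \sum_(Z in coref_partitions m) L Z * pZ Z * 1.
  by apply: eq_bigr => Z _; rewrite mulr1.
rewrite (funext joint_partialE); exact: cvg_sum_mixture.
Qed.

Lemma joint_normE : joint_norm L pZ pC = linkage_norm.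
Proof. exact: cvg_lim joint_partial_cvg. Qed.

Lemma marg_post_pLA N : marg_post L pZ pC N = pLA L pZ pC N.
Proof.
rewrite /marg_post joint_normE /pLA mulr_suml; apply: eq_bigr => Z _.
by rewrite /joint_unnorm /pL !mulrA (mulrC (pC _ N)).
Qed.

End JointPosterior.

Theorem theorem1 (R : realType) (K : nat) (m : 'I_K -> nat)
  (L pZ : {set {set record m}} -> R)
  (pC : {ffun {ffun 'I_K -> bool} -> nat} -> nat -> R) :
  (forall Z, Z \in coref_partitions m -> 0 <= L Z) ->
  (forall Z, Z \in coref_partitions m -> 0 <= pZ Z) ->
  0 < \sum_(Z in coref_partitions m) L Z * pZ Z ->
  (forall Z, Z \in coref_partitions m ->
     (forall N, 0 <= pC (ntab Z) N) /\
     (fun n => \sum_(N < n) pC (ntab Z) N) @ \oo --> (1 : R)) ->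
  cvgn (joint_partial L pZ pC) /\ 0 < joint_norm L pZ pC /\
  (forall N : nat, marg_post L pZ pC N = pLA L pZ pC N).
Proof.
move=> _ _ linkage_norm_gt0 pC_distr.
have pC_sum1 Z (PZ : Z \in coref_partitions m) := (pC_distr Z PZ).2.
split.
  by apply/cvg_ex; exists (\sum_(Z in coref_partitions m) L Z * pZ Z);
    exact: joint_partial_cvg.
split; first by rewrite joint_normE.
exact: marg_post_pLA.
Qed.
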